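(* Let \(a,b,c\) be positive integers, \(m\) a positive integer that is not a perfect square, with \(\gcd(am,b^2-c^2m)=1\), and let \(A,B\in\mathbb Z\). Let \((\bar x,\bar y,\bar z,\bar w)\) be the unique element of \(\mathbb Z^4\) with \(0\leq\bar z<am\), \(0\leq\bar w<a\) satisfying \(a\sqrt m(\bar x+\bar y\sqrt m)+(b+c\sqrt m)(\bar z+\bar w\sqrt m)=A+B\sqrt m\). Then the equation \(a\sqrt m(x+y\sqrt m)+(b+c\sqrt m)(z+w\sqrt m)=A+B\sqrt m\) has a solution with \(x,y,z,w\in\mathbb N\) if and only if \(\bar x\geq 0\) and \(\bar y\geq 0\).
   Context: \(\mathbb N\) denotes the set of non-negative integers. (Existence and uniqueness of \((\bar x,\bar y,\bar z,\bar w)\) under the stated hypotheses may be assumed.) *)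

From mathcomp Require Import all_boot all_order all_algebra.
From mathcomp Require Import reals.
Set Implicit Arguments. Unset Strict Implicit. Unset Printing Implicit Defensive.
Import Order.TTheory GRing.Theory Num.Theory.
Local Open Scope ring_scope.

Definition sol_eq (R : realType) (a b c m : nat) (A B x y z w : int) : Prop :=
  let s := Num.sqrt (m%:R : R) in
  a%:R * s * (x%:~R + y%:~R * s) + (b%:R + c%:R * s) * (z%:~R + w%:~R * s)
  = A%:~R + B%:~R * s.

Definition is_square (m : nat) : Prop := exists k : nat, m = (k * k)%N.

From mathcomp Require Import all_boot all_order all_algebra.
From mathcomp Require Import reals ring zify.
Import Order.TTheory GRing.Theory Num.Theory.

Set Implicit Arguments.
Unset Strict Implicit.

(* Since sqrt m is irrational, an equation in Z[sqrt m] splits into two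
   linear equations over Z.  Two solutions of these then differ by an element
   of the kernel of the linear map, and coprimality of am and b^2 - c^2 m
   forces every kernel element to have z-component in amZ and w-component in
   aZ, with x- and y-components determined by them.  The bounds on zb, wb make
   the corresponding multipliers k, l nonnegative when (x, y, z, w) is
   nonnegative, so xb = x + cmk + bl and yb = y + bk + cl are nonnegative. *)

Lemma square_of_mul_sqr (m p q : nat) : 0 < q -> m * q ^ 2 = p ^ 2 -> is_square m.
Proof.
move=> q_gt0 E; have : q ^ 2 %| p ^ 2 by rewrite -E dvdn_mull.
rewrite dvdn_pexp2r // => /dvdnP[t Dp]; exists t.
apply/eqP; rewrite -(@eqn_pmul2r (q ^ 2)) ?expn_gt0 ?q_gt0 //.
by rewrite E Dp expnMn mulnn.
Qed.

Local Open Scope ring_scope.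

Lemma sqrt_nonsquare_indep (R : rcfType) (m : nat) (p q : int) :
  ~ is_square m -> p%:~R + q%:~R * Num.sqrt (m%:R : R) = 0 -> p = 0 /\ q = 0.
Proof.
move=> nsq pq0; set s := Num.sqrt _ in pq0.
have s2 : s ^+ 2 = m%:R by rewrite sqr_sqrtr ?ler0n.
have Emq : m%:Z * q ^+ 2 = p ^+ 2.
  apply: (intr_inj (R := R)); rewrite rmorphM !rmorphXn /=.
  have -> : p%:~R = - (q%:~R * s) :> R by apply/eqP; rewrite -addr_eq0 pq0.
  by rewrite sqrrN exprMn s2 mulrC.
have q0 : q = 0.
  apply/eqP; apply: contraT => q_neq0; exfalso; apply: nsq.
  apply: (@square_of_mul_sqr _ `|p|%N `|q|%N); first by rewrite absz_gt0.
  by rewrite -!abszX -Emq abszM.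
by move: pq0; rewrite q0 mul0r addr0 => /eqP; rewrite intr_eq0 => /eqP.
Qed.

Lemma sol_eqE (R : realType) (a b c m : nat) (A B x y z w : int) :
  ~ is_square m ->
  sol_eq R a b c m A B x y z w <->
  a%:Z * m%:Z * y + b%:Z * z + c%:Z * m%:Z * w = A /\
  a%:Z * x + c%:Z * z + b%:Z * w = B.
Proof.
move=> nsq; rewrite /sol_eq; set s := Num.sqrt _.
have s2 : s * s = m%:R by rewrite -expr2 sqr_sqrtr ?ler0n.
set P := _ + _ + _; set Q := _ + _ + _.
have split_parts :
    a%:R * s * (x%:~R + y%:~R * s) + (b%:R + c%:R * s) * (z%:~R + w%:~R * s)
    - (A%:~R + B%:~R * s) = (P - A)%:~R + (Q - B)%:~R * s :> R.
  rewrite !(rmorphD, rmorphB, rmorphM) /= -[(m%:Z)%:~R]/(m%:R : R) -s2; ring.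
split=> [/eqP|[eA eB]].
  rewrite -subr_eq0 split_parts => /eqP /(sqrt_nonsquare_indep nsq) [/eqP + /eqP].
  by rewrite !subr_eq0 => /eqP-> /eqP->.
by apply/eqP; rewrite -subr_eq0 split_parts eA eB !subrr mul0r addr0.
Qed.

Arguments sol_eqE R {a b c m A B x y z w}.

Section Kernel.

Variables a b c m : int.
Hypothesis am_neq0 : a * m != 0.
Hypothesis am_coprime : coprimez (a * m) (b ^+ 2 - c ^+ 2 * m).

Lemma kernel_param dx dy dz dw :
    a * m * dy + b * dz + c * m * dw = 0 -> a * dx + c * dz + b * dw = 0 ->
  exists k l, [/\ dz = k * (a * m), dw = l * a,
                  dy = - (b * k + c * l) & dx = - (c * m * k + b * l)].
Proof.
move=> e1 e2.
have [k Dz] : exists k, dz = k * (a * m).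
  apply/dvdzP; rewrite -(Gauss_dvdzl _ am_coprime).
  have -> : dz * (b ^+ 2 - c ^+ 2 * m) = (c * dx - b * dy) * (a * m)
      + b * (a * m * dy + b * dz + c * m * dw) - c * m * (a * dx + c * dz + b * dw).
    by ring.
  by rewrite e1 e2 !mulr0 subr0 addr0 dvdz_mull ?dvdzz.
have [l Dw] : exists l, dw = l * a.
  have a_coprime : coprimez a (b ^+ 2 - c ^+ 2 * m).
    by move: am_coprime; rewrite coprimezMl => /andP[].
  apply/dvdzP; rewrite -(Gauss_dvdzl _ a_coprime).
  have -> : dw * (b ^+ 2 - c ^+ 2 * m) = (c * m * dy - b * dx) * a
      - c * (a * m * dy + b * dz + c * m * dw) + b * (a * dx + c * dz + b * dw).
    by ring.
  by rewrite e1 e2 !mulr0 subr0 addr0 dvdz_mull ?dvdzz.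
have a_neq0 : a != 0 by move: am_neq0; rewrite mulf_eq0 negb_or => /andP[].
exists k, l; split=> //; apply/eqP; rewrite -addr_eq0.
- have : a * m * (dy + (b * k + c * l)) = 0 by rewrite -e1 Dz Dw; ring.
  by move/eqP; rewrite mulf_eq0 (negbTE am_neq0).
- have : a * (dx + (c * m * k + b * l)) = 0 by rewrite -e2 Dz Dw; ring.
  by move/eqP; rewrite mulf_eq0 (negbTE a_neq0).
Qed.

End Kernel.

Lemma ge0_coef_of_lt (n r k : int) : 0 < n -> r < n -> 0 <= r + k * n -> 0 <= k.
Proof. by nia. Qed.

Theorem lemma12 (R : realType) (a b c m : nat) (A B : int)
    (xb yb zb wb : int) :
  (0 < a)%N -> (0 < b)%N -> (0 < c)%N -> (0 < m)%N ->
  ~ is_square m ->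
  gcdz (a * m)%N%:Z (b%:Z ^+ 2 - c%:Z ^+ 2 * m%:Z) = 1 ->
  0 <= zb < (a * m)%N%:Z -> 0 <= wb < a%:Z ->
  sol_eq R a b c m A B xb yb zb wb ->
  ((exists x y z w : nat, sol_eq R a b c m A B x%:Z y%:Z z%:Z w%:Z)
   <-> (0 <= xb /\ 0 <= yb)).
Proof.
move=> a_gt0 _ _ m_gt0 nsq gcd1 /andP[zb_ge0 zb_lt] /andP[wb_ge0 wb_lt].
move=> /(sol_eqE R nsq) [eA eB]; split; last first.
  case=> xb_ge0 yb_ge0; exists `|xb|%N, `|yb|%N, `|zb|%N, `|wb|%N.
  by apply/(sol_eqE R nsq); rewrite !gez0_abs.
case=> x [y [z [w /(sol_eqE R nsq) [ea eb]]]].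
have am_neq0 : a%:Z * m%:Z != 0 by rewrite -PoszM; lia.
have am_coprime : coprimez (a%:Z * m%:Z) (b%:Z ^+ 2 - c%:Z ^+ 2 * m%:Z).
  by rewrite /coprimez -PoszM gcd1.
have e1 : a%:Z * m%:Z * (y%:Z - yb) + b%:Z * (z%:Z - zb) + c%:Z * m%:Z * (w%:Z - wb) = 0.
  by rewrite -(subrr A) -{1}ea -eA; ring.
have e2 : a%:Z * (x%:Z - xb) + c%:Z * (z%:Z - zb) + b%:Z * (w%:Z - wb) = 0.
  by rewrite -(subrr B) -{1}eb -eB; ring.
have [k [l [Dz Dw Dy Dx]]] := kernel_param am_neq0 am_coprime e1 e2.
have k_ge0 : 0 <= k by apply: (ge0_coef_of_lt _ zb_lt); lia.
have l_ge0 : 0 <= l by apply: (ge0_coef_of_lt _ wb_lt); lia.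
have -> : xb = x%:Z + (c%:Z * m%:Z * k + b%:Z * l) by lia.
have -> : yb = y%:Z + (b%:Z * k + c%:Z * l) by lia.
by split; rewrite !addr_ge0 ?mulr_ge0.
Qed.
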